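(* Let $G=(V,E)$ be a finite directed acyclic graph with source $S$, run the dissemination protocol below, and fix a slot $t\ge1$ such that the source transmits in slot $t+1$ (i.e. $t+1\le T_S$). Then with probability at least $1-C/q$, where $C$ depends only on $G$, $n$, the rates and $t$, the following implication holds: if $\tau_w\le t$ for every non-source node $w$ and the subspaces $\Pi_w(t)$, $w\in V$, are pairwise distinct, then for every non-source node $u$ and every parent $u_i$ of $u$, the node $u_i$ is the unique node $w\in V$ minimizing $\dim\Pi_w(t)$ among all $w\in V$ with $\Pi^{(u_i)}_u(t+1)\subseteq\Pi_w(t)$. Consequently, the topology of $G$ is uniquely determined by $\{\Pi_w(t)\}_{w\in V}$ together with $\{\Pi^{(u_i)}_u(t+1)\}_{(u_i,u)\in E}$.
   Context: Dissemination protocol: $q$ is a prime power; $G=(V,E)$ is a finite directed acyclic graph without multiple edges, with a source node $S$; each edge $e$ has an integer rate $r_e\ge1$. The source holds $\Pi_S=\mathbb{F}_q^n$ and we set $\Pi_S(s)=\mathbb{F}_q^n$ for all $s$. Time is slotted, $s=1,2,\dots$; vectors sent in slot $s$ are received before the end of slot $s$. In each slot $s\le T_S$ (for some fixed end time $T_S$) the source sends on each outgoing edge $e$ exactly $r_e$ vectors drawn uniformly at random from $\mathbb{F}_q^n$. Each non-source node $v$ has a waiting time $\tau_v$ (possibly random, where the event $\{\tau_v\le s\}$ is determined by what was sent in slots $1,\dots,s$); in each slot $s\ge\tau_v+1$, $v$ sends on each outgoing edge $e$ exactly $r_e$ vectors, each drawn uniformly at random from $\Pi_v(s-1)$. All random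 draws in a slot are mutually independent and independent of the past. $\Pi_v(s)$ is the span of all vectors received by $v$ in slots $1,\dots,s$ ($\Pi_v(0)=\{0\}$), and $\Pi^{(w)}_v(s)$ is the span of all vectors received by $v$ from its parent $w$ in slots $1,\dots,s$. A parent of $u$ is a node $w$ with $(w,u)\in E$. *)

From HB Require Import structures.
From mathcomp Require Import all_boot all_order all_algebra.
Set Implicit Arguments. Unset Strict Implicit. Unset Printing Implicit Defensive.
Import Order.TTheory GRing.Theory Num.Theory.
Local Open Scope ring_scope.

Definition dag (V : finType) (E : rel V) : Prop :=
  forall x y, E x y -> ~~ connect E y x.

(* Maximal rate; index j of a vector on edge e ranges over j < r_e <= maxrate. *)
Definition maxrate (V : finType) (r : V -> V -> nat) : nat :=
  (\max_(p : V * V) r p.1 p.2)%N.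

(* Index of a transmitted vector: (k, w, u, j) = the j-th vector sent on edge
   (w,u) in slot k+1.  An outcome of the protocol over slots 1..T assigns a
   vector of F^n to every index (indices that are not actually transmitted
   carry the zero vector). *)
Notation index V T R := ('I_T * V * V * 'I_R)%type.
Notation outcome F V n T R := {ffun index V T R -> 'rV[F]_n}.

(* Does w send its j-th vector on (w,u) in slot k+1?  tw = waiting times
   (already evaluated at the outcome). Source sends in slots s <= TS;
   a non-source node w sends in slots s >= tau_w + 1, i.e. tau_w <= k. *)
Definition sends (V : finType) (E : rel V) (S : V) (r : V -> V -> nat)
    (TS : nat) (tw : V -> nat) (k : nat) (w u : V) (j : nat) : bool :=
  [&& E w u, (j < r w u)%N & (if w == S then (k < TS)%N else (tw w <= k)%N)].

Definition recv (F : finFieldType) (V : finType) (n T R : nat) (E : rel V)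
    (S : V) (r : V -> V -> nat) (TS : nat) (tw : V -> nat)
    (om : outcome F V n T R) (W : pred V) (u : V) (s : nat)
    : {vspace 'rV[F]_n} :=
  <<[seq om i | i <- enum [pred i : index V T R |
        [&& (i.1.1.1 < s)%N, W i.1.1.2, i.1.2 == u &
            sends E S r TS tw i.1.1.1 i.1.1.2 i.1.2 i.2]]]>>%VS.

Definition Pi (F : finFieldType) (V : finType) (n T R : nat) (E : rel V)
    (S : V) (r : V -> V -> nat) (TS : nat) (tw : V -> nat)
    (om : outcome F V n T R) (v : V) (s : nat) : {vspace 'rV[F]_n} :=
  if v == S then fullv else recv E S r TS tw om predT v s.

Definition Pi_from (F : finFieldType) (V : finType) (n T R : nat) (E : rel V)
    (S : V) (r : V -> V -> nat) (TS : nat) (tw : V -> nat)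
    (om : outcome F V n T R) (u w : V) (s : nat) : {vspace 'rV[F]_n} :=
  recv E S r TS tw om (pred1 w) u s.

Definition stopping_times (F : finFieldType) (V : finType) (n T R : nat)
    (tau : V -> outcome F V n T R -> nat) : Prop :=
  forall (v : V) (s : nat) (om om' : outcome F V n T R),
    (forall i : index V T R, (i.1.1.1 < s)%N -> om i = om' i) ->
    (tau v om <= s)%N = (tau v om' <= s)%N.

(* Probability of an outcome: product over all transmissions of the
   probability of drawing that vector uniformly from Pi_w(k) (slot k+1 uses
   Pi_w(s-1) = Pi_w(k)); non-transmitted indices carry 0 deterministically. *)
Definition weight (F : finFieldType) (V : finType) (n T R : nat) (E : rel V)
    (S : V) (r : V -> V -> nat) (TS : nat)
    (tau : V -> outcome F V n T R -> nat) (om : outcome F V n T R) : rat :=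
  let tw := fun v => tau v om in
  \prod_(i : index V T R)
    (if sends E S r TS tw i.1.1.1 i.1.1.2 i.1.2 i.2 then
       (if om i \in Pi E S r TS tw om i.1.1.2 i.1.1.1 then
          (#|[pred x : 'rV[F]_n | x \in Pi E S r TS tw om i.1.1.2 i.1.1.1]|%:R)^-1
        else 0)
     else (if om i == 0 then 1 else 0)).

Definition Pr (F : finFieldType) (V : finType) (n T R : nat) (E : rel V)
    (S : V) (r : V -> V -> nat) (TS : nat)
    (tau : V -> outcome F V n T R -> nat) (A : pred (outcome F V n T R)) : rat :=
  \sum_(om | A om) weight E S r TS tau om.

Definition topology_event (F : finFieldType) (V : finType) (n T R : nat)
    (E : rel V) (S : V) (r : V -> V -> nat) (TS : nat)
    (tau : V -> outcome F V n T R -> nat) (t : nat)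
    (om : outcome F V n T R) : bool :=
  let tw := fun v => tau v om in
  let P := Pi E S r TS tw om in
  let PF := Pi_from E S r TS tw om in
  ([forall w, (w != S) ==> (tw w <= t)%N] &&
   [forall w, forall w', (w != w') ==> (P w t != P w' t)])
  ==>
  [forall u, forall p, ((u != S) && E p u) ==>
     ((PF u p t.+1 <= P p t)%VS &&
      [forall w, ((w != p) && (PF u p t.+1 <= P w t)%VS) ==>
                   (\dim (P p t) < \dim (P w t))%N])].

(* Topology inference for random linear network coding: with probability at
   least 1 - C/q, every parent p of a non-source node u is the unique node w of
   smallest Pi_w(t) containing the span Pi^{(p)}_u(t+1).
   - The law of the protocol is a sequential product of kernels, one per
     transmission, each depending only on earlier slots (waiting times are
     stopping times).  Section SequentialKernels bounds the total mass of such
     a product by the product of the per-index masses, peeling off an index of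
     maximal slot.
   - A collision (p sends in slot t+1, Pi_p(t) is not inside Pi_w(t), yet the
     uniform vector of Pi_p(t) lands in Pi_w(t)) has probability <= 1/q.
   - Without collisions the topology event holds: the vector p sends in slot
     t+1 lies in Pi^{(p)}_u(t+1), so Pi^{(p)}_u(t+1) <= Pi_w(t) forces
     Pi_p(t) <= Pi_w(t), and distinctness makes the inclusion strict.
   A union bound over (transmission, node) pairs gives C = #|index * V|. *)
From HB Require Import structures.
From mathcomp Require Import all_boot all_order all_algebra finfield.
Import Order.TTheory GRing.Theory Num.Theory.
Set Implicit Arguments.
Unset Strict Implicit.
Unset Printing Implicit Defensive.

Local Open Scope ring_scope.

Section SequentialKernels.
Variables (I D : finType) (level : I -> nat).
Variable kernel : I -> {ffun I -> D} -> D -> rat.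
Hypothesis kernel_causal : forall i (om om' : {ffun I -> D}),
  (forall j, (level j < level i)%N -> om j = om' j) ->
  forall x, kernel i om x = kernel i om' x.
Hypothesis kernel_ge0 : forall i om x, 0 <= kernel i om x.

Definition agrees_off (A : {set I}) (om0 om : {ffun I -> D}) : bool :=
  [forall j, (j \notin A) ==> (om j == om0 j)].

Definition partial_mass (A : {set I}) (om0 : {ffun I -> D}) : rat :=
  \sum_(om | agrees_off A om0 om) \prod_(i in A) kernel i om (om i).

Definition upd (om : {ffun I -> D}) (i : I) (x : D) : {ffun I -> D} :=
  [ffun j => if j == i then x else om j].

Lemma upd_same om i x : upd om i x i = x.
Proof. by rewrite ffunE eqxx. Qed.

Lemma upd_upd om i x y : upd (upd om i x) i y = upd om i y.
Proof. by apply/ffunP => j; rewrite !ffunE; case: eqP. Qed.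

Lemma upd_id om i : upd om i (om i) = om.
Proof. by apply/ffunP => j; rewrite ffunE; case: eqP => [->|]. Qed.

(* Outcomes agreeing with om0 off A are in bijection with pairs of an outcome
   agreeing with om0 off A :\ i and a value of coordinate i. *)
Lemma agrees_off_upd (A : {set I}) om0 om i x : i \in A ->
  (agrees_off A om0 (upd om i x) && (upd om i (om0 i) == om))
  = agrees_off (A :\ i) om0 om.
Proof.
move=> Ai; apply/andP/forallP => [[/forallP h /eqP <-] j | h].
  rewrite in_setD1 negb_and negbK ffunE; case: eqP => [->|/eqP ji] //=.
  by have := h j; rewrite ffunE (negbTE ji).
split.
  apply/forallP => j; apply/implyP => jA; rewrite ffunE.
  have ji : j != i by apply: contraNneq jA => ->.
  by rewrite (negbTE ji); apply: (implyP (h j)); rewrite in_setD1 (negbTE jA) andbF.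
apply/eqP/ffunP => j; rewrite ffunE; case: eqP => [->|//].
by apply/esym/eqP; apply: (implyP (h i)); rewrite in_setD1 eqxx.
Qed.

Lemma kernel_upd j om i x : (level j <= level i)%N -> j != i ->
  kernel j (upd om i x) (upd om i x j) = kernel j om (om j).
Proof.
move=> lji ji; rewrite ffunE (negbTE ji); apply: kernel_causal => k lk.
rewrite ffunE; case: eqP => [ek|//].
by move: (leq_trans lk lji); rewrite ek ltnn.
Qed.

Lemma partial_mass_peel (A : {set I}) om0 i : i \in A ->
  (forall j, j \in A -> level j <= level i)%N ->
  partial_mass A om0 = \sum_(om | agrees_off (A :\ i) om0 om)
                         (\sum_x kernel i om x) * \prod_(j in A :\ i) kernel j om (om j).
Proof.
move=> Ai imax; rewrite /partial_mass.
rewrite (partition_big (fun om : {ffun I -> D} => om i) predT) //=.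
under eq_bigr => x _.
  rewrite (reindex_onto (fun om => upd om i x) (fun om => upd om i (om0 i))); last first.
    by move=> om /andP[_ /eqP <-]; rewrite upd_upd upd_id.
  rewrite (eq_bigl (agrees_off (A :\ i) om0)); last first.
    by move=> om; rewrite upd_same eqxx andbT upd_upd agrees_off_upd.
  under eq_bigr => om _.
    rewrite (bigD1 i) //= upd_same.
    rewrite (@kernel_causal i _ om); last first.
      by move=> j lj; rewrite ffunE; case: eqP => // ej; rewrite ej ltnn in lj.
    rewrite (eq_bigr (fun j => kernel j om (om j))); last first.
      by move=> j /andP[jA ji]; apply: kernel_upd => //; apply: imax.
    over.
  over.
rewrite /= exchange_big /=; apply: eq_bigr => om _; rewrite mulr_suml.
by apply: eq_bigr => x _; congr (_ * _); apply: eq_bigl => j; rewrite in_setD1 andbC.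
Qed.

Lemma partial_mass_set0 om0 : partial_mass set0 om0 = 1.
Proof.
rewrite /partial_mass (eq_bigl (pred1 om0)) ?big_pred1_eq ?big_set0 // => om.
apply/forallP/eqP => [h|-> j]; last by rewrite eqxx implybT.
by apply/ffunP => j; apply/eqP; apply: (implyP (h j)); rewrite in_set0.
Qed.

Lemma partial_mass_le (c : I -> rat) : (forall i, 0 <= c i) ->
  (forall i om, \sum_x kernel i om x <= c i) ->
  forall (A : {set I}) om0, partial_mass A om0 <= \prod_(i in A) c i.
Proof.
move=> c_ge0 hc A; elim: {A}_.+1 {-2}A (ltnSn #|A|) => // m IH A hA om0.
have [->|[i0 Ai0]] := set_0Vmem A; first by rewrite partial_mass_set0 big_set0.
case: (arg_maxnP level Ai0) => i Ai imax.
rewrite (partial_mass_peel om0 Ai imax) (bigD1 i Ai) /=.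
have -> : \prod_(j | (j \in A) && (j != i)) c j = \prod_(j in A :\ i) c j.
  by apply: eq_bigl => j; rewrite in_setD1 andbC.
apply: le_trans (_ : \sum_(om | agrees_off (A :\ i) om0 om)
   c i * \prod_(j in A :\ i) kernel j om (om j) <= _).
  by apply: ler_sum => om _; apply: ler_wpM2r => //; apply: prodr_ge0.
rewrite -mulr_sumr ler_wpM2l // IH // -ltnS (leq_trans _ hA) // ltnS.
by apply: proper_card; apply: properD1.
Qed.

Lemma partial_mass_eq (c : I -> rat) :
  (forall i om, \sum_x kernel i om x = c i) ->
  forall (A : {set I}) om0, partial_mass A om0 = \prod_(i in A) c i.
Proof.
move=> hc A; elim: {A}_.+1 {-2}A (ltnSn #|A|) => // m IH A hA om0.
have [->|[i0 Ai0]] := set_0Vmem A; first by rewrite partial_mass_set0 big_set0.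
case: (arg_maxnP level Ai0) => i Ai imax.
rewrite (partial_mass_peel om0 Ai imax) (bigD1 i Ai) /=.
under eq_bigr => om _ do rewrite hc.
rewrite -mulr_sumr -/(partial_mass (A :\ i) om0) IH; last first.
  by rewrite -ltnS (leq_trans _ hA) // ltnS proper_card // properD1.
by congr (_ * _); apply: eq_bigl => j; rewrite in_setD1 andbC.
Qed.

Lemma partial_mass_setT om0 :
  partial_mass setT om0 = \sum_(om : {ffun I -> D}) \prod_i kernel i om (om i).
Proof.
apply: eq_big => [om|om _]; last by apply: eq_bigl => j; rewrite in_setT.
by apply/forallP => j; rewrite in_setT.
Qed.

Lemma total_mass_le (d0 : D) (c : I -> rat) : (forall i, 0 <= c i) ->
  (forall i om, \sum_x kernel i om x <= c i) ->
  \sum_(om : {ffun I -> D}) \prod_i kernel i om (om i) <= \prod_i c i.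
Proof.
move=> c_ge0 hc; rewrite -(partial_mass_setT [ffun=> d0]).
have -> : \prod_i c i = \prod_(i in setT) c i by apply: eq_bigl => j; rewrite in_setT.
exact: partial_mass_le.
Qed.

Lemma total_mass_eq (d0 : D) (c : I -> rat) :
  (forall i om, \sum_x kernel i om x = c i) ->
  \sum_(om : {ffun I -> D}) \prod_i kernel i om (om i) = \prod_i c i.
Proof.
move=> hc; rewrite -(partial_mass_setT [ffun=> d0]) (partial_mass_eq hc).
by apply: eq_bigl => j; rewrite in_setT.
Qed.
End SequentialKernels.

Lemma union_bound (O B : finType) (wt : O -> rat) (A : pred O) (bad : B -> pred O) :
  (forall o, 0 <= wt o) ->
  (forall o, wt o != 0 -> ~~ A o -> exists b, bad b o) ->
  \sum_(o | ~~ A o) wt o <= \sum_b \sum_(o | bad b o) wt o.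
Proof.
move=> wt_ge0 cover.
rewrite [X in _ <= X](exchange_big_dep predT) //= [X in X <= _]big_mkcond /=.
apply: ler_sum => o _; have sum_ge0 : 0 <= \sum_(b | bad b o) wt o by exact: sumr_ge0.
case: ifPn => Ao //; have [wo0|/cover/(_ Ao) [b bo]] := eqVneq (wt o) 0.
  by rewrite {1}wo0.
by rewrite (bigD1 b) //= lerDl sumr_ge0.
Qed.

Lemma card_cap_not_sub (F : finFieldType) (n : nat) (U W : {vspace 'rV[F]_n}) :
  ~~ (U <= W)%VS -> (#|(U :&: W)%VS| * #|F| <= #|U|)%N.
Proof.
move=> nUW; rewrite !card_vspace -expnSr leq_exp2l ?finNzRing_gt1 //.
rewrite (ltn_leqif (dimv_leqif_eq (capvSl U W))).
by apply: contra nUW => /eqP/capv_idPl.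
Qed.

Section Protocol.
Variables (F : finFieldType) (V : finType) (E : rel V) (S : V) (n T R : nat).
Variables (r : V -> V -> nat) (TS : nat) (tau : V -> outcome F V n T R -> nat).
Hypothesis tau_stopping : stopping_times tau.

Local Notation I := ('I_T * V * V * 'I_R)%type.
Local Notation Om := (outcome F V n T R).
Local Notation tw om := (fun v => tau v om).
Local Notation sends_at om := (sends E S r TS (fun v => tau v om)).
Local Notation Pi_at om := (Pi E S r TS (fun v => tau v om) om).

(* Transmission i = (k, w, u, j) takes place in slot k+1: its slot index k is
   the level in the sequential-kernel description of the protocol. *)
Definition slot (i : I) : nat := i.1.1.1.

Definition transmission_kernel (i : I) (om : Om) (x : 'rV[F]_n) : rat :=
  if sends_at om i.1.1.1 i.1.1.2 i.1.2 i.2 then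
    (if x \in Pi_at om i.1.1.2 i.1.1.1 then
       (#|[pred y : 'rV[F]_n | y \in Pi_at om i.1.1.2 i.1.1.1]|%:R)^-1 else 0)
  else (if x == 0 then 1 else 0).

Lemma weight_kernels om :
  weight E S r TS tau om = \prod_i transmission_kernel i om (om i).
Proof. by []. Qed.

(* Causality: everything the protocol does up to slot k is determined by the
   vectors sent in slots 1..k (this is where tau being stopping times is used). *)
Lemma sends_causal (om om' : Om) s :
  (forall j, (slot j < s)%N -> om j = om' j) ->
  forall k, (k <= s)%N -> forall w u j, sends_at om k w u j = sends_at om' k w u j.
Proof.
move=> h k ks w u jj; rewrite /sends (@tau_stopping w k om om') // => j hj.
by apply: h; apply: leq_trans hj ks.
Qed.

Lemma recv_causal (W : pred V) (om om' : Om) s :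
  (forall j, (slot j < s)%N -> om j = om' j) ->
  forall k, (k <= s)%N -> forall u,
  recv E S r TS (tw om) om W u k = recv E S r TS (tw om') om' W u k.
Proof.
move=> h k ks u; rewrite /recv.
set sel := fun om0 : Om => [pred i : I | [&& (i.1.1.1 < k)%N, W i.1.1.2, i.1.2 == u &
            sends_at om0 i.1.1.1 i.1.1.2 i.1.2 i.2]].
have -> : enum (sel om) = enum (sel om').
  apply: eq_enum => i; rewrite !inE; case ik: (i.1.1.1 < k)%N => //=.
  by rewrite (sends_causal h (leq_trans (ltnW ik) ks)).
congr (<< _ >>%VS); apply/eq_in_map => i; rewrite mem_enum inE => /andP[ik _].
by apply: h; apply: leq_trans ik ks.
Qed.

Lemma Pi_causal (om om' : Om) s :
  (forall j, (slot j < s)%N -> om j = om' j) ->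
  forall k, (k <= s)%N -> forall v, Pi_at om v k = Pi_at om' v k.
Proof. by move=> h k ks v; rewrite /Pi (recv_causal predT h ks). Qed.

Lemma transmission_kernel_causal i (om om' : Om) :
  (forall j, (slot j < slot i)%N -> om j = om' j) ->
  forall x, transmission_kernel i om x = transmission_kernel i om' x.
Proof.
by move=> h x; rewrite /transmission_kernel (sends_causal h) // (Pi_causal h).
Qed.

Lemma transmission_kernel_ge0 i om x : 0 <= transmission_kernel i om x.
Proof.
by rewrite /transmission_kernel; do 2!case: ifP => _; rewrite ?invr_ge0 ?ler0n.
Qed.

Lemma transmission_kernel_mass i om : \sum_x transmission_kernel i om x = 1.
Proof.
rewrite /transmission_kernel; case: (sends_at om _ _ _ _) => /=; last first.
  by rewrite (bigD1 0) //= eqxx big1 ?addr0 // => x /negbTE ->.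
rewrite -big_mkcond /= sumr_const; set c := #|_|.
have c_gt0 : (0 < c)%N by apply/card_gt0P; exists 0; exact: mem0v.
by rewrite -[X in X = 1]mulr_natr mulVf // pnatr_eq0 -lt0n.
Qed.

Lemma weight_ge0 om : 0 <= weight E S r TS tau om.
Proof. by rewrite weight_kernels; apply: prodr_ge0 => i _; exact: transmission_kernel_ge0. Qed.

Lemma weight_total : \sum_(om : Om) weight E S r TS tau om = 1.
Proof.
under eq_bigr do rewrite weight_kernels.
by rewrite (total_mass_eq transmission_kernel_causal 0 transmission_kernel_mass) big1_eq.
Qed.

Lemma Pi_mono om v k k' : (k <= k')%N -> (Pi_at om v k <= Pi_at om v k')%VS.
Proof.
move=> kk; rewrite /Pi; case: (v == S) => //.
apply/span_subvP => x /mapP[i]; rewrite mem_enum inE => /and4P[ik Wi iu si] ->.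
by apply: memv_span; apply: map_f; rewrite mem_enum inE Wi iu si (leq_trans ik kk).
Qed.

Lemma sent_in_span om (i : I) : weight E S r TS tau om != 0 ->
  sends_at om i.1.1.1 i.1.1.2 i.1.2 i.2 -> om i \in Pi_at om i.1.1.2 i.1.1.1.
Proof.
rewrite weight_kernels => /prodf_neq0 /(_ i isT) + si.
by rewrite /transmission_kernel si; case: ifP; rewrite ?eqxx.
Qed.

Lemma Pi_from_sub_Pi om u p k : weight E S r TS tau om != 0 ->
  (Pi_from E S r TS (tw om) om u p k.+1 <= Pi_at om p k)%VS.
Proof.
move=> w_neq0; apply/span_subvP => x /mapP[i].
rewrite mem_enum inE => /and4P[ik /eqP ip _ si] ->.
rewrite ltnS in ik; apply: (subvP (Pi_mono om p ik)); rewrite -ip; exact: sent_in_span.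
Qed.

Definition collides (i0 : I) (w : V) (om : Om) (x : 'rV[F]_n) : bool :=
  [&& sends_at om (slot i0) i0.1.1.2 i0.1.2 i0.2,
      ~~ (Pi_at om i0.1.1.2 (slot i0) <= Pi_at om w (slot i0))%VS &
      x \in Pi_at om w (slot i0)].

Definition collision_kernel i0 w (i : I) (om : Om) (x : 'rV[F]_n) : rat :=
  if (i == i0) && ~~ collides i0 w om x then 0 else transmission_kernel i om x.

Lemma collision_kernel_causal i0 w i (om om' : Om) :
  (forall j, (slot j < slot i)%N -> om j = om' j) ->
  forall x, collision_kernel i0 w i om x = collision_kernel i0 w i om' x.
Proof.
move=> h x; rewrite /collision_kernel (transmission_kernel_causal h).
have [ei|//] := eqVneq i i0.
by rewrite /= /collides -ei (sends_causal h) // !(Pi_causal h).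
Qed.

Lemma collision_kernel_ge0 i0 w i om x : 0 <= collision_kernel i0 w i om x.
Proof. by rewrite /collision_kernel; case: ifP => _; rewrite ?transmission_kernel_ge0. Qed.

Lemma collision_kernel_mass i0 w i om :
  \sum_x collision_kernel i0 w i om x <= (if i == i0 then (#|F|%:R)^-1 else 1).
Proof.
rewrite /collision_kernel; have [-> /=|_] := eqVneq i i0; last first.
  by rewrite /= transmission_kernel_mass.
rewrite /collides /transmission_kernel /slot.
case si: (sends_at om _ _ _ _) => /=; first case sub: (_ <= _)%VS => /=;
  try by rewrite big1 ?invr_ge0 ?ler0n // => x _; case: ifP.
set Pp := Pi_at om i0.1.1.2 i0.1.1.1; set Pw := Pi_at om w i0.1.1.1.
rewrite (eq_bigr (fun x => if x \in (Pp :&: Pw)%VS then (#|Pp|%:R)^-1 else 0));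
  last by move=> x _; rewrite memv_cap; case: (x \in Pw); case: (x \in Pp).
rewrite -big_mkcond /= sumr_const -[_ *+ #|_|]mulr_natl.
have Pp_gt0 : (0 < #|Pp|)%N by apply/card_gt0P; exists 0; exact: mem0v.
have F_gt0 : (0 < #|F|)%N by apply: ltnW; exact: finNzRing_gt1.
rewrite ler_pdivrMr ?ltr0n // mulrC ler_pdivlMr ?ltr0n // -natrM ler_nat.
exact: card_cap_not_sub (negbT sub).
Qed.

Lemma Pr_collides_le i0 w :
  \sum_(om | collides i0 w om (om i0)) weight E S r TS tau om <= (#|F|%:R)^-1.
Proof.
have -> : \sum_(om | collides i0 w om (om i0)) weight E S r TS tau om =
          \sum_(om : Om) \prod_i collision_kernel i0 w i om (om i).
  rewrite big_mkcond; apply: eq_bigr => om _.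
  rewrite weight_kernels (bigD1 i0) // [RHS](bigD1 i0) //=.
  have -> : \prod_(i | i != i0) collision_kernel i0 w i om (om i) =
            \prod_(i | i != i0) transmission_kernel i om (om i).
    by apply: eq_bigr => i /negbTE ni; rewrite /collision_kernel ni.
  by rewrite /collision_kernel eqxx; case: collides; rewrite ?mul0r.
pose c i : rat := if i == i0 then (#|F|%:R)^-1 else 1.
have c_ge0 i : 0 <= c i by rewrite /c; case: ifP; rewrite ?invr_ge0 ?ler0n.
apply: le_trans (total_mass_le (collision_kernel_causal i0 w)
                  (collision_kernel_ge0 i0 w) 0 c_ge0 (collision_kernel_mass i0 w)) _.
by rewrite (bigD1 i0) //= big1 ?mulr1 /c ?eqxx // => i /negbTE ->.
Qed.

Lemma topology_event_of_no_collision t om :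
  (t < T)%N -> (t < TS)%N ->
  (forall x y, E x y -> 0 < r x y)%N -> (forall x y, r x y <= R)%N ->
  weight E S r TS tau om != 0 -> (forall i0 w, ~~ collides i0 w om (om i0)) ->
  topology_event E S r TS tau t om.
Proof.
move=> tT tTS r_gt0 r_leR w_neq0 no_coll; rewrite /topology_event /=.
apply/implyP => /andP[/forallP started /forallP distinct].
apply/forallP => u; apply/forallP => p; apply/implyP => /andP[_ Epu].
have sub_p := Pi_from_sub_Pi u p t w_neq0; rewrite sub_p /=.
apply/forallP => w; apply/implyP => /andP[wp sub_w].
have R_gt0 : (0 < R)%N := leq_trans (r_gt0 _ _ Epu) (r_leR p u).
pose i0 : I := (Ordinal tT, p, u, Ordinal R_gt0).
have sent : sends_at om t p u 0.
  rewrite /sends Epu r_gt0 //=; case: ifPn => // pS; exact: (implyP (started p)).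
have in_w : om i0 \in Pi_at om w t.
  apply: (subvP sub_w); apply: memv_span; apply: map_f.
  by rewrite mem_enum inE /= ltnSn !eqxx sent.
have Pp_sub_Pw : (Pi_at om p t <= Pi_at om w t)%VS.
  by move: (no_coll i0 w); rewrite /collides /= sent in_w andbT negbK.
have Pp_neq_Pw : Pi_at om p t != Pi_at om w t.
  by have := implyP (forallP (distinct p) w); rewrite eq_sym wp; apply.
by rewrite (ltn_leqif (dimv_leqif_eq Pp_sub_Pw)).
Qed.

Lemma Pr_topology_event t :
  (t < T)%N -> (t < TS)%N ->
  (forall x y, E x y -> 0 < r x y)%N -> (forall x y, r x y <= R)%N ->
  1 - #|{: I * V}|%:R / #|F|%:R <= Pr E S r TS tau (topology_event E S r TS tau t).
Proof.
move=> tT tTS r_gt0 r_leR.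
have bad : \sum_(om | ~~ topology_event E S r TS tau t om) weight E S r TS tau om
           <= #|{: I * V}|%:R / #|F|%:R.
  apply: le_trans (union_bound (bad := fun b om => collides b.1 b.2 om (om b.1))
                     weight_ge0 _) _.
    move=> om w_neq0 /negP not_event.
    case: (pickP (fun b : I * V => collides b.1 b.2 om (om b.1))) => [b|none];
      first by exists b.
    case: not_event; apply: topology_event_of_no_collision => // i0 w.
    by rewrite (none (i0, w)).
  apply: le_trans (_ : \sum_(b : I * V) (#|F|%:R)^-1 <= _).
    by apply: ler_sum => b _; exact: Pr_collides_le.
  by rewrite sumr_const mulr_natl.
rewrite /Pr -[X in X - _ <= _]weight_total (bigID (topology_event E S r TS tau t)) /=.
by rewrite -addrA gerDl subr_le0.
Qed.
End Protocol.

Lemma rate_le_maxrate (V : finType) (r : V -> V -> nat) x y : (r x y <= maxrate r)%N.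
Proof. exact: (@leq_bigmax _ (fun p : V * V => r p.1 p.2) (x, y)). Qed.

Theorem theorem4 (V : finType) (E : rel V) (S : V) (n : nat)
    (r : V -> V -> nat) (t : nat) :
  dag E ->
  (forall w, ~~ E w S) ->
  (forall x y, E x y -> (0 < r x y)%N) ->
  (1 <= t)%N ->
  exists C : rat,
    forall (F : finFieldType) (TS : nat)
           (tau : V -> outcome F V n t.+1 (maxrate r) -> nat),
      (t.+1 <= TS)%N ->
      stopping_times tau ->
      1 - C / (#|F|%:R) <= Pr E S r TS tau (topology_event E S r TS tau t).
Proof.
move=> _ _ r_gt0 _.
exists #|{: ('I_t.+1 * V * V * 'I_(maxrate r)) * V}|%:R => F TS tau tTS tau_stopping.
exact (Pr_topology_event S tau_stopping (ltnSn t) tTS r_gt0 (@rate_le_maxrate V r)).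
Qed.
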